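(* Let $n\ge 1$, $L>0$, and let $f:[0,1]^n\to\mathbb{R}$ satisfy $|f(x)-f(y)|\le L\|x-y\|$ for all $x,y\in[0,1]^n$, and let $x_*\in[0,1]^n$ be a minimizer of $f$. Run the algorithm described in the context on $f$ for $T\ge1$ queries, producing edge vectors $v_1,\dots,v_T$ and values $f_t=f(P(x_t))$. Then $$\sum_{t=1}^T f_t-\sum_{t=1}^T f(x_* )\le (1+\theta)L\sum_{t=1}^T\|v_t\|,$$ where $\theta=2^{1/n}$.
   Context: Notation: $\|\cdot\|$ is the Euclidean norm; $\Omega=[0,1]^n$; $\theta=2^{1/n}$; $P:\mathbb{R}^n\to\Omega$ is the Euclidean projection onto $\Omega$ (coordinatewise clipping to $[0,1]$); $e_i$ is the $i$-th standard basis vector and $v(i)$ the $i$-th coordinate of $v$. The algorithm maintains a list of candidates, each a triple (center $x$, edge vector $v$, score $s$). Splitting rule: given an evaluated point $x_a$ with edge vector $v_a$ and value $f_a$, let $I$ be an index maximizing $v_a(i)$ over $i\in\{1,\dots,n\}$ (ties broken by smallest index), let $z=\tfrac{v_a(I)}{2}e_I$, and add to the list the two candidates $(x_a+z,\ v_a-z,\ f_a-L\|v_a\|)$ and $(x_a-z,\ v_a-z,\ f_a-L\|v_a\|)$. Initialization: $x_1=v_1=(\theta^{-1},\theta^{-2},\dots,\theta^{-n})$, $f_1=f(P(x_1))$, and apply the splitting rule to $(x_1,v_1,f_1)$. For each $t\ge 2$: remove from the list a candidate with the smallest score (ties arbitrary), call its center $x_t$ and edge vector $v_t$, evaluate $f_t=f(P(x_t))$,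 and apply the splitting rule to $(x_t,v_t,f_t)$. *)

From HB Require Import structures.
From mathcomp Require Import all_boot all_order all_algebra.
From mathcomp Require Import reals exp.
Set Implicit Arguments. Unset Strict Implicit. Unset Printing Implicit Defensive.
Import Order.TTheory GRing.Theory Num.Theory.
Local Open Scope ring_scope.

Section Defs.
Variables (R : realType) (n : nat).

Definition vec := {ffun 'I_n -> R}.

Definition enorm (v : vec) : R := Num.sqrt (\sum_(i < n) v i ^+ 2).

Definition in_Omega (x : vec) : Prop := forall i, 0 <= x i <= 1.

Definition proj (x : vec) : vec := [ffun i => Num.max 0 (Num.min 1 (x i))].

Definition theta : R := powR 2 (n%:R)^-1.

Definition init_vec : vec := [ffun i : 'I_n => theta ^- (i.+1)].

(* candidate = (center, edge vector, score) *)
Definition cand := (vec * vec * R)%type.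

Definition first_argmax (v : vec) (I : 'I_n) : Prop :=
  (forall j, v j <= v I) /\ (forall j : 'I_n, (j < I)%N -> v j < v I).

Definition half_edge (v : vec) (I : 'I_n) : vec :=
  [ffun i => if i == I then v I / 2 else 0].

Definition split_into (L : R) (x v : vec) (fa : R) (Q Q' : seq cand) : Prop :=
  exists I, first_argmax v I /\
    Q' = Q ++ [:: (x + half_edge v I, v - half_edge v I, fa - L * enorm v);
                  (x - half_edge v I, v - half_edge v I, fa - L * enorm v)].

Definition alg_step (L : R) (f : vec -> R) (Q Q' : seq cand) (x v : vec) : Prop :=
  exists (s : R) (rest : seq cand),
    perm_eq Q ((x, v, s) :: rest) /\
    (forall d, d \in rest -> s <= d.2) /\
    split_into L x v (f (proj x)) rest Q'.

(* A run of the algorithm with T queries: X t, V t are the center and edge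
   vector of query t (1 <= t <= T), Q t is the candidate list after query t. *)
Definition valid_run (L : R) (f : vec -> R) (T : nat)
    (X V : nat -> vec) (Q : nat -> seq cand) : Prop :=
  X 1%N = init_vec /\ V 1%N = init_vec /\
  split_into L (X 1%N) (V 1%N) (f (proj (X 1%N))) [::] (Q 1%N) /\
  (forall t, (2 <= t <= T)%N -> alg_step L f (Q t.-1) (Q t) (X t) (V t)).

End Defs.

From HB Require Import structures.
From mathcomp Require Import all_boot all_order all_algebra.
From mathcomp Require Import reals exp.
From mathcomp Require Import lra ring.
Set Implicit Arguments. Unset Strict Implicit. Unset Printing Implicit Defensive.
Import Order.TTheory GRing.Theory Num.Theory.
Local Open Scope ring_scope.

(* Every candidate (x, v, s) stands for the box {y : |y - x| <= v coordinatewise},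
   and throughout the run these boxes cover [0,1]^n, each score s is a lower bound
   of f on its box (by the Lipschitz bound at the parent's center), and
   f(P(x)) - s <= (1 + theta) L ||v||.  The last inequality holds because the
   edge vector always is a scaled permutation of (theta^-1, ..., theta^-n):
   halving its longest coordinate rotates the exponents, so a child's edge has
   norm ||v_parent|| / theta.  Since the removed candidate has the smallest score,
   and some box contains a minimizer x, its score is at most f(x); this bounds
   each regret term f_t - f(x) by (1 + theta) L ||v_t||. *)

Lemma ler_dist_max {R : realDomainType} (c a b : R) :
  `|Num.max c a - Num.max c b| <= `|a - b|.
Proof.
have h1 : a - b <= `|a - b| := ler_norm _.
have h2 : b - a <= `|a - b| by rewrite distrC ler_norm.
by rewrite ler_norml /Num.max; case: (ltP c a); case: (ltP c b) => *; apply/andP; split; lra.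
Qed.

Lemma ler_dist_min {R : realDomainType} (c a b : R) :
  `|Num.min c a - Num.min c b| <= `|a - b|.
Proof.
have h1 : a - b <= `|a - b| := ler_norm _.
have h2 : b - a <= `|a - b| by rewrite distrC ler_norm.
by rewrite ler_norml /Num.min; case: (ltP c a); case: (ltP c b) => *; apply/andP; split; lra.
Qed.

Lemma val_ord_pred (n : nat) (i : 'I_n) :
  (ord_pred i : nat) = if (i : nat) == 0%N then n.-1 else (i : nat).-1.
Proof.
case: i => [[|k] lt] /=.
  by rewrite add0n modn_small // prednK // (leq_ltn_trans _ lt).
by rewrite modnDr modn_small // ltnW.
Qed.

Section Run.
Variables (R : realType) (n : nat).
Implicit Types (x v w y : vec R n).

Lemma ler_enorm v w : (forall i, `|v i| <= `|w i|) -> enorm v <= enorm w.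
Proof.
move=> le_vw; apply: ler_wsqrtr; apply: ler_sum => i _.
rewrite -(real_normK (num_real (v i))) -(real_normK (num_real (w i))).
by rewrite lerXn2r ?nnegrE ?normr_ge0.
Qed.

Lemma proj_in_Omega x : in_Omega (proj x).
Proof.
move=> i; rewrite ffunE le_max lexx /= ge_max ler01 /=.
by rewrite ge_min lexx.
Qed.

Lemma proj_id y : in_Omega y -> proj y = y.
Proof.
move=> yO; apply/ffunP => i; have /andP[y0 y1] := yO i.
by rewrite ffunE (min_r y1) (max_r y0).
Qed.

Lemma enorm_proj_sub x y : enorm (proj x - proj y) <= enorm (x - y).
Proof.
apply: ler_enorm => i; rewrite /proj !ffunE.
by apply: le_trans (ler_dist_max _ _ _) _; apply: ler_dist_min.
Qed.

Definition in_box x v y := forall i, `|y i - x i| <= v i.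

Lemma enorm_in_box x v y : in_box x v y -> enorm (x - y) <= enorm v.
Proof.
move=> xvy; apply: ler_enorm => i; rewrite !ffunE distrC.
exact: le_trans (xvy i) (ler_norm _).
Qed.

Lemma in_box_split x v y I : 0 < v I -> in_box x v y ->
  in_box (x + half_edge v I) (v - half_edge v I) y \/
  in_box (x - half_edge v I) (v - half_edge v I) y.
Proof.
move=> vI xvy.
case: (lerP (x I) (y I)) => h; [left|right] => i; have := xvy i;
  rewrite !ffunE; case: eqP => [->|_]; rewrite ?subr0 ?addr0;
  rewrite !ler_norml => /andP[? ?]; apply/andP; split; lra.
Qed.

Lemma in_box_child x v y I xc : 0 < v I ->
  xc = x + half_edge v I \/ xc = x - half_edge v I ->
  in_box xc (v - half_edge v I) y -> in_box x v y.
Proof.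
move=> vI hxc xcy i; have := xcy i; rewrite !ffunE.
by case: hxc => ->; rewrite !ffunE; case: eqP => [->|_];
  rewrite ?subr0 ?addr0 !ler_norml => /andP[? ?]; apply/andP; split; lra.
Qed.

Lemma enorm_child_sub x v I xc : 0 < v I ->
  xc = x + half_edge v I \/ xc = x - half_edge v I ->
  enorm (xc - x) <= enorm (v - half_edge v I).
Proof.
move=> vI hxc; apply: ler_enorm => i; rewrite !ffunE.
case: hxc => ->; rewrite !ffunE addrAC ?subrr ?add0r; case: eqP => [->|_];
  rewrite ?normrN ?normr0 ?normr_ge0 // !ger0_norm; lra.
Qed.

Hypothesis n_gt0 : (0 < n)%N.

Lemma thetaXn : theta R n ^+ n = 2.
Proof.
rewrite /theta -powR_mulrn ?powR_ge0 // -powRrM mulVf ?powRr1 //.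
by rewrite pnatr_eq0 -lt0n.
Qed.

Lemma theta_gt1 : 1 < theta R n.
Proof.
rewrite ltNge; apply/negP => theta_le1.
have := exprn_ile1 n (powR_ge0 _ _) theta_le1.
by rewrite -/(theta R n) thetaXn -[1]/(1%:R) ler_nat.
Qed.

Lemma theta_gt0 : 0 < theta R n.
Proof. exact: lt_trans ltr01 theta_gt1. Qed.

Lemma ltr_thetaV m k : (m < k)%N -> theta R n ^- k < theta R n ^- m.
Proof.
move=> mk; rewrite ltf_pV2 ?posrE ?exprn_gt0 ?theta_gt0 //.
by rewrite ltr_eXn2l ?theta_gt1.
Qed.

Definition geom_edge (c : R) (e : 'I_n -> 'I_n) v :=
  [/\ 0 < c, injective e & forall i, v i = c * theta R n ^- (e i).+1].

Lemma geom_edge_gt0 c e v i : geom_edge c e v -> 0 < v i.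
Proof.
by case=> c0 _ ->; rewrite mulr_gt0 // invr_gt0 exprn_gt0 // theta_gt0.
Qed.

Lemma enorm_geom_edge c e v : geom_edge c e v -> enorm v = c * enorm (init_vec R n).
Proof.
case=> c0 inj_e hv; rewrite /enorm.
under eq_bigr do rewrite hv exprMn.
rewrite -mulr_sumr sqrtrM ?exprn_ge0 ?ltW // sqrtr_sqr ger0_norm ?ltW //.
congr (_ * Num.sqrt _); rewrite [RHS](reindex_inj inj_e).
by apply: eq_bigr => i _; rewrite ffunE.
Qed.

Lemma geom_edge_argmax c e v I : geom_edge c e v -> first_argmax v I -> e I = 0%N :> nat.
Proof.
case=> c0 inj_e hv [v_le_vI _]; have [g eK gK] := injF_bij inj_e.
case eI: (e I : nat) => [|k] //; exfalso.
have := v_le_vI (g (Ordinal n_gt0)); rewrite !hv gK /= eI.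
by apply/negP; rewrite -ltNge ltr_pM2l // ltr_thetaV.
Qed.

(* As theta^n = 2, halving c * theta^-1 gives (c / theta) * theta^-n: the scale drops by
   theta and the exponents rotate down by one. *)
Lemma geom_edge_split c e v I : geom_edge c e v -> first_argmax v I ->
  geom_edge (c / theta R n) (@ord_pred n \o e) (v - half_edge v I).
Proof.
move=> ev vI; have eI := geom_edge_argmax ev vI; case: ev => c0 inj_e hv.
split; first by rewrite divr_gt0 ?theta_gt0.
  exact: inj_comp (@ord_pred_inj n) inj_e.
move=> i; rewrite !ffunE /=.
change ((e i + n).-1 %% n)%N with (nat_of_ord (ord_pred (e i))).
rewrite val_ord_pred; case: (eqVneq i I) => [->|ne].
  by rewrite eI prednK // hv eI expr1 thetaXn; lra.
have ei0 : (e i : nat) != 0%N.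
  by apply: contra_neq ne => ei0; apply: inj_e; apply: val_inj; rewrite /= ei0 eI.
by rewrite (negPf ei0) subr0 hv prednK ?lt0n // exprS invfM mulrA.
Qed.

Lemma enorm_geom_edge_split c e v I : geom_edge c e v -> first_argmax v I ->
  enorm v = theta R n * enorm (v - half_edge v I).
Proof.
move=> ev vI; rewrite (enorm_geom_edge ev) (enorm_geom_edge (geom_edge_split ev vI)).
by rewrite mulrA mulrCA divff ?mulr1 // gt_eqF ?theta_gt0.
Qed.

Lemma geom_edge_init : geom_edge 1 id (init_vec R n).
Proof. by split=> [|//|i]; rewrite ?ltr01 // ffunE mul1r. Qed.

Lemma in_box_init y : in_Omega y -> in_box (init_vec R n) (init_vec R n) y.
Proof.
move=> yO i; have /andP[y0 y1] := yO i.
have half_le : 2^-1 <= init_vec R n i.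
  rewrite ffunE -thetaXn; have := ltn_ord i; rewrite leq_eqVlt => /orP[/eqP->//|lt_in].
  exact/ltW/ltr_thetaV.
rewrite ler_norml; apply/andP; split; lra.
Qed.

Variables (L : R) (f : vec R n -> R).
Hypothesis L_gt0 : 0 < L.
Hypothesis f_lip : forall x y, in_Omega x -> in_Omega y ->
  `|f x - f y| <= L * enorm (x - y).

Lemma box_lower_bound x v y : in_Omega y -> in_box x v y ->
  f (proj x) - L * enorm v <= f y.
Proof.
move=> yO xvy.
have fxy : f (proj x) - f y <= L * enorm (proj x - y).
  exact: le_trans (ler_norm _) (f_lip (proj_in_Omega x) yO).
have : L * enorm (proj x - y) <= L * enorm v.
  rewrite ler_pM2l // -(proj_id yO).
  exact: le_trans (enorm_proj_sub _ _) (enorm_in_box xvy).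
lra.
Qed.

Definition sound_cand (d : cand R n) : Prop :=
  [/\ exists c e, geom_edge c e d.1.2,
      forall y, in_Omega y -> in_box d.1.1 d.1.2 y -> d.2 <= f y &
      f (proj d.1.1) - d.2 <= (1 + theta R n) * L * enorm d.1.2].

Definition covers (Q : seq (cand R n)) : Prop :=
  forall y, in_Omega y -> exists2 d, d \in Q & in_box d.1.1 d.1.2 y.

Definition sound_list (Q : seq (cand R n)) : Prop :=
  covers Q /\ {in Q, forall d, sound_cand d}.

Lemma child_sound c e x v I xc : geom_edge c e v -> first_argmax v I ->
  xc = x + half_edge v I \/ xc = x - half_edge v I ->
  sound_cand (xc, v - half_edge v I, f (proj x) - L * enorm v).
Proof.
move=> ev vI hxc; have vI_gt0 := geom_edge_gt0 I ev.
split=> /=.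
- by exists (c / theta R n), (@ord_pred n \o e); exact: geom_edge_split.
- by move=> y yO xcy; apply: box_lower_bound yO _; exact: in_box_child hxc xcy.
- have fxc : f (proj xc) - f (proj x) <= L * enorm (v - half_edge v I).
    apply: le_trans (ler_norm _) _.
    apply: le_trans (f_lip (proj_in_Omega _) (proj_in_Omega _)) _.
    rewrite ler_pM2l //.
    exact: le_trans (enorm_proj_sub _ _) (enorm_child_sub vI_gt0 hxc).
  rewrite (enorm_geom_edge_split ev vI).
  have -> : (1 + theta R n) * L * enorm (v - half_edge v I) =
    L * enorm (v - half_edge v I) + L * (theta R n * enorm (v - half_edge v I)) by ring.
  lra.
Qed.

Lemma split_sound c e x v rest Q' : geom_edge c e v ->
  split_into L x v (f (proj x)) rest Q' ->
  {in rest, forall d, sound_cand d} ->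
  (forall y, in_Omega y ->
     in_box x v y \/ exists2 d, d \in rest & in_box d.1.1 d.1.2 y) ->
  sound_list Q'.
Proof.
move=> ev [I [vI ->]] rest_sound cov; split.
  move=> y yO; have [xvy|[d dr dy]] := cov y yO; last by exists d; rewrite // mem_cat dr.
  have [xcy|xcy] := in_box_split (geom_edge_gt0 I ev) xvy.
    by exists (x + half_edge v I, v - half_edge v I, f (proj x) - L * enorm v);
      rewrite // mem_cat !in_cons eqxx orbT.
  by exists (x - half_edge v I, v - half_edge v I, f (proj x) - L * enorm v);
    rewrite // mem_cat !in_cons eqxx !orbT.
move=> d; rewrite mem_cat !in_cons in_nil orbF => /orP[/rest_sound //|/orP[]/eqP->].
  by apply: child_sound ev vI _; left.
by apply: child_sound ev vI _; right.
Qed.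

Lemma sound_list_init Q : split_into L (init_vec R n) (init_vec R n)
  (f (proj (init_vec R n))) [::] Q -> sound_list Q.
Proof.
move=> spl; apply: split_sound geom_edge_init spl _ _ => // y yO.
by left; exact: in_box_init.
Qed.

Lemma regret_init y : in_Omega y ->
  f (proj (init_vec R n)) - f y <= (1 + theta R n) * L * enorm (init_vec R n).
Proof.
move=> yO; have := box_lower_bound yO (in_box_init yO).
have : L * enorm (init_vec R n) <= (1 + theta R n) * L * enorm (init_vec R n).
  by rewrite -mulrA ler_peMl ?mulr_ge0 ?sqrtr_ge0 ?ltW //; have := theta_gt0; lra.
lra.
Qed.

(* The removed candidate has the smallest score, so its score is at most that of
   a box containing y, which is a lower bound of f y. *)
Lemma alg_step_sound Q Q' x v y : sound_list Q -> alg_step L f Q Q' x v ->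
  in_Omega y ->
  sound_list Q' /\ f (proj x) - f y <= (1 + theta R n) * L * enorm v.
Proof.
move=> [cov sound] [s [rest [pe [s_min spl]]]] yO.
have memQ d : (d \in Q) = (d \in (x, v, s) :: rest) by rewrite (perm_mem pe).
have [[c [e ev]] _ regret] : sound_cand (x, v, s) by apply: sound; rewrite memQ mem_head.
split.
  apply: split_sound ev spl _ _ => [d dr|z zO].
    by apply: sound; rewrite memQ in_cons dr orbT.
  have [d] := cov z zO; rewrite memQ in_cons => /orP[/eqP->|dr dz]; first by left.
  by right; exists d.
have [d dQ dy] := cov y yO; have [_ d_lb _] := sound d dQ.
have s_le : s <= d.2 by move: dQ; rewrite memQ in_cons => /orP[/eqP->|/s_min].
have := d_lb y yO dy; rewrite /= in regret; lra.
Qed.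

Lemma valid_run_regret T X V Q y : valid_run L f T X V Q -> in_Omega y ->
  forall t, (1 <= t <= T)%N ->
  sound_list (Q t) /\ f (proj (X t)) - f y <= (1 + theta R n) * L * enorm (V t).
Proof.
move=> [X1 [V1 [spl1 steps]]] yO; elim=> [//|[_ _|t IH /andP[_ tT]]].
  by rewrite X1 V1 in spl1 *; split; [exact: sound_list_init|exact: regret_init].
have [sQ _] := IH (ltnW tT).
exact: alg_step_sound sQ (steps t.+2 tT) yO.
Qed.

End Run.

Theorem lemma3 (R : realType) (n : nat) (L : R) (f : vec R n -> R)
    (xstar : vec R n) (T : nat) (X V : nat -> vec R n)
    (Q : nat -> seq (cand R n)) :
  (1 <= n)%N -> 0 < L ->
  (forall x y, in_Omega x -> in_Omega y -> `|f x - f y| <= L * enorm (x - y)) ->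
  in_Omega xstar -> (forall y, in_Omega y -> f xstar <= f y) ->
  (1 <= T)%N ->
  valid_run L f T X V Q ->
  \sum_(1 <= t < T.+1) f (proj (X t)) - \sum_(1 <= t < T.+1) f xstar
    <= (1 + theta R n) * L * \sum_(1 <= t < T.+1) enorm (V t).
Proof.
move=> n_gt0 L_gt0 f_lip xstar_in _ _ run.
rewrite -sumrB mulr_sumr; apply: ler_sum_nat => t /andP[t_gt0 tT].
have t_range : (1 <= t <= T)%N by rewrite t_gt0 -ltnS.
by have [] := valid_run_regret n_gt0 L_gt0 f_lip run xstar_in t_range.
Qed.
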